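(* Let $n\ge 1$, $N\ge 1$ be integers, $p\in(0,1)$, and let $I:\{0,1\}^n\to\{0,1\}$ be a decoding-error indicator with error-correcting capability $t$ (an integer $0\le t<n$ such that $I(\mathbf z)=0$ whenever $wt(\mathbf z)\le t$). For $q\in(0,1)$ let $\hat P_{IS}(e;q)=\frac1N\sum_{j=1}^N I(\mathbf z_j)W(wt(\mathbf z_j);p,q)$ with $\mathbf z_1,\dots,\mathbf z_N$ i.i.d. with pmf $f(\mathbf z;q)=q^{wt(\mathbf z)}(1-q)^{n-wt(\mathbf z)}$, and let $V(q)=\mathrm{var}_q[\hat P_{IS}(e;q)]$. Suppose $\sum_{i=t+1}^n P_p(e;i)>0$. Then the parameter $\hat q\in(0,1)$ that minimizes $V$ over $(0,1)$ satisfies $$\hat q=\frac1n\,\frac{\sum_{i=t+1}^{n} i\,W(i;p,\hat q)\,P_p(e;i)}{\sum_{i=t+1}^{n} W(i;p,\hat q)\,P_p(e;i)}.$$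
   Context: Setting: a linear block code of length $n$ is used over a binary symmetric channel (BSC) with cross-over probability $p$; w.l.o.g. the all-zero codeword is sent, so the channel output equals the error pattern $\mathbf z\in\{0,1\}^n$, whose bits are i.i.d. Bernoulli($p$). $wt(\mathbf z)$ is the number of ones in $\mathbf z$. $I(\mathbf z)=1$ if the decoder decodes $\mathbf z$ erroneously and $0$ otherwise; $t$ is the maximum number of errors the decoder always corrects. The weighting function is $W(i;p,q)=\frac{p^i(1-p)^{n-i}}{q^i(1-q)^{n-i}}$. $P_p(e;i)=\sum_{\mathbf z:\,wt(\mathbf z)=i} I(\mathbf z)\,p^i(1-p)^{n-i}$ is the joint probability that a decoding error occurs and the error pattern has weight $i$ on a BSC with parameter $p$. The word error rate is $P(e)=\sum_{\mathbf z}I(\mathbf z)p^{wt(\mathbf z)}(1-p)^{n-wt(\mathbf z)}$, and the variance is $V(q)=\frac1N\big(\mathbb E_q[I(\mathbf z)W^2(wt(\mathbf z);p,q)]-P(e)^2\big)$, where $\mathbb E_q$ is expectation under $f(\cdot;q)$. *)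

From HB Require Import structures.
From mathcomp Require Import all_boot all_order all_algebra.
From mathcomp Require Import all_classical all_reals.
Set Implicit Arguments. Unset Strict Implicit. Unset Printing Implicit Defensive.
Import Order.TTheory GRing.Theory Num.Theory.
Local Open Scope ring_scope.

(* Error patterns z in {0,1}^n are finite functions 'I_n -> bool. *)
Definition wt (n : nat) (z : {ffun 'I_n -> bool}) : nat := (\sum_(k < n) z k)%N.

Section Defs.
Variables (R : realType) (n : nat).

(* Probability of a fixed pattern of weight i on a BSC(p). *)
Definition bsc (p : R) (i : nat) : R := p ^+ i * (1 - p) ^+ (n - i).

Definition fpmf (q : R) (z : {ffun 'I_n -> bool}) : R := bsc q (wt z).

Definition W (i : nat) (p q : R) : R := bsc p i / bsc q i.

Definition Pei (I : {ffun 'I_n -> bool} -> bool) (p : R) (i : nat) : R :=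
  \sum_(z : {ffun 'I_n -> bool} | wt z == i) (I z)%:R * bsc p i.

Definition Pe (I : {ffun 'I_n -> bool} -> bool) (p : R) : R :=
  \sum_(z : {ffun 'I_n -> bool}) (I z)%:R * fpmf p z.

Definition Vis (N : nat) (I : {ffun 'I_n -> bool} -> bool) (p q : R) : R :=
  N%:R^-1 * (\sum_(z : {ffun 'I_n -> bool}) (I z)%:R * (W (wt z) p q) ^+ 2 * fpmf q z
             - (Pe I p) ^+ 2).

End Defs.

From HB Require Import structures.
From mathcomp Require Import all_boot all_order all_algebra.
From mathcomp Require Import all_classical all_reals all_analysis.
From mathcomp Require Import ring.
Set Implicit Arguments. Unset Strict Implicit. Unset Printing Implicit Defensive.
Import Order.TTheory GRing.Theory Num.Theory.
Local Open Scope ring_scope.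

(* Up to the constant P(e)^2 and the factor 1/N, V(q) is the second moment
   g(q) = sum_z I(z) f(z;p)^2 / f(z;q), and (1/f(z;q))' = (nq - wt z)/(q(1-q)) / f(z;q).
   At the interior minimiser g' vanishes, which says that n q^ is the mean of wt z
   for the nonnegative weights I(z) W(wt z;p,q^) f(z;p); these have positive total
   because W > 0 and sum_i P_p(e;i) > 0. Grouping the patterns by weight gives the
   formula. *)

Lemma wt_ub n (z : {ffun 'I_n -> bool}) : (wt z <= n)%N.
Proof.
rewrite /wt -[X in (_ <= X)%N]card_ord -sum1_card.
by apply: leq_sum => i _; exact: leq_b1.
Qed.

Lemma sum_partition_wt (V : nmodType) n (F : {ffun 'I_n -> bool} -> V) :
  \sum_(0 <= i < n.+1) \sum_(z | wt z == i) F z = \sum_z F z.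
Proof.
rewrite big_mkord (exchange_big_dep predT) //=; apply: eq_bigr => z _.
rewrite (big_pred1 (inord (wt z))) // => i /=.
by rewrite eq_sym -val_eqE /= inordK // ltnS wt_ub.
Qed.

Lemma sum_wt_gt (V : nmodType) n t (F : {ffun 'I_n -> bool} -> V) :
  (t < n)%N -> (forall z, (wt z <= t)%N -> F z = 0) ->
  \sum_(t.+1 <= i < n.+1) \sum_(z | wt z == i) F z = \sum_z F z.
Proof.
move=> tn F0; rewrite -sum_partition_wt.
rewrite [RHS](@big_cat_nat _ _ _ t.+1) //; last by rewrite ltnS ltnW.
rewrite [X in _ = X + _]big1_seq ?add0r // => i; rewrite mem_index_iota.
by case/andP=> _ it; rewrite big1 // => z /eqP wzi; apply: F0; rewrite wzi -ltnS.
Qed.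

Lemma is_derive_sum_fin (R : numFieldType) (V W : normedModType R) (T : finType)
    (h : T -> V -> W) (x v : V) (dh : T -> W) :
  (forall i, is_derive x v (h i) (dh i)) ->
  is_derive x v (fun y => \sum_i h i y) (\sum_i dh i).
Proof.
move=> hdh; rewrite -fct_sumE.
by elim/big_ind2: _ => // [|f df g dg]; [exact: is_derive_cst | exact: is_deriveD].
Qed.

Lemma mulr_natl_expr_pred (R : pzSemiRingType) k (x : R) :
  k%:R * x ^+ k.-1 * x = k%:R * x ^+ k.
Proof. by case: k => [|k]; rewrite ?mul0r //= exprSr mulrA. Qed.

Section ImportanceSampling.
Variables (R : realType) (n : nat).

Lemma bsc_gt0 (q : R) k : 0 < q < 1 -> 0 < bsc n q k.
Proof. by case/andP=> q0 q1; rewrite mulr_gt0 ?exprn_gt0 ?subr_gt0. Qed.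

Lemma W_gt0 (p q : R) k : 0 < p < 1 -> 0 < q < 1 -> 0 < W n k p q.
Proof. by move=> pI qI; rewrite divr_gt0 ?bsc_gt0. Qed.

Lemma is_derive_bsc (q : R) k : (k <= n)%N -> 0 < q < 1 ->
  is_derive (q : R^o) 1 (fun y : R^o => bsc n y k : R^o)
    ((k%:R - n%:R * q) / (q * (1 - q)) * bsc n q k).
Proof.
move=> kn /andP[q0 q1].
have -> : (fun y : R^o => bsc n y k : R^o) = id ^+ k * (cst 1 - id) ^+ (n - k).
  by apply/funext => y; rewrite /bsc !fctE.
apply: is_derive_eq; rewrite !fctE /GRing.scale /=.
have qq : q * (1 - q) != 0 by rewrite mulf_neq0 ?lt0r_neq0 ?subr_gt0.
apply: (mulIf qq); rewrite [RHS]mulrAC divfK // /bsc.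
transitivity (q ^+ k * - ((n - k)%:R * (1 - q) ^+ (n - k).-1 * (1 - q)) * q
  + (1 - q) ^+ (n - k) * (k%:R * q ^+ k.-1 * q) * (1 - q)); first by ring.
by rewrite !mulr_natl_expr_pred natrB //; ring.
Qed.

Lemma is_derive_bsc_inv (q : R) k : (k <= n)%N -> 0 < q < 1 ->
  is_derive (q : R^o) 1 (fun y : R^o => (bsc n y k)^-1 : R^o)
    ((n%:R * q - k%:R) / (q * (1 - q)) / bsc n q k).
Proof.
move=> kn qI; have bq := lt0r_neq0 (bsc_gt0 k qI).
have := @is_deriveV R (fun y => bsc n y k) q _ 1 bq (is_derive_bsc kn qI).
move/is_derive_eq; apply; rewrite /GRing.scale /=.
case/andP: qI => q0 q1; field.
by rewrite bq !lt0r_neq0 ?subr_gt0.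
Qed.

Variable I : {ffun 'I_n -> bool} -> bool.

Definition second_moment (p q : R) : R :=
  \sum_z (I z)%:R * bsc n p (wt z) ^+ 2 / bsc n q (wt z).

Lemma Vis_second_moment N (p q : R) : 0 < q < 1 ->
  Vis N I p q = N%:R^-1 * (second_moment p q - Pe I p ^+ 2).
Proof.
move=> qI; congr (_ * (_ - _)); apply: eq_bigr => z _.
rewrite /W /fpmf; field; exact: lt0r_neq0 (bsc_gt0 _ qI).
Qed.

Lemma is_derive_second_moment (p q : R) : 0 < q < 1 ->
  is_derive (q : R^o) 1 (second_moment p : R^o -> R^o)
    ((q * (1 - q))^-1 *
     \sum_z W n (wt z) p q * ((I z)%:R * bsc n p (wt z)) * (n%:R * q - (wt z)%:R)).
Proof.
move=> qI; pose c z := (I z)%:R * bsc n p (wt z) ^+ 2.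
have := @is_derive_sum_fin R R^o R^o _ (fun z y => c z *: (bsc n y (wt z))^-1) q 1 _
  (fun z => is_deriveZ (c z) (is_derive_bsc_inv (wt_ub z) qI)).
move/is_derive_eq; apply; rewrite mulr_sumr; apply: eq_bigr => z _.
have [q0 q1] := andP qI; rewrite /GRing.scale /= /c /W; field.
by rewrite !lt0r_neq0 ?subr_gt0 ?bsc_gt0.
Qed.

Lemma second_moment_stationary (p qhat : R) : 0 < qhat < 1 ->
    (forall q, 0 < q < 1 -> second_moment p qhat <= second_moment p q) ->
  \sum_z W n (wt z) p qhat * ((I z)%:R * bsc n p (wt z)) * (n%:R * qhat - (wt z)%:R) = 0.
Proof.
move=> qI qmin; have [q0 q1] := andP qI.
have crit : is_derive (qhat : R^o) 1 (second_moment p : R^o -> R^o) 0.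
  apply: (derive1_at_min ler01) => [q||q]; rewrite ?in_itv //= => qI'.
  - by have [] := is_derive_second_moment p qI'.
  - exact: qmin.
have := @derive_val _ _ _ _ _ _ _ (is_derive_second_moment p qI).
rewrite (@derive_val _ _ _ _ _ _ _ crit).
by move/esym/eqP; rewrite mulf_eq0 invr_eq0 mulf_eq0 gt_eqF // subr_eq0 gt_eqF // => /eqP.
Qed.

Lemma sum_Pei_by_pattern t (p : R) (f : nat -> R) : (t < n)%N ->
    (forall z, (wt z <= t)%N -> I z = false) ->
  \sum_(t.+1 <= i < n.+1) f i * Pei I p i =
  \sum_z f (wt z) * ((I z)%:R * bsc n p (wt z)).
Proof.
move=> tn It; rewrite -(sum_wt_gt tn) => [|z /It ->]; last by rewrite mul0r mulr0.
by apply: eq_bigr => i _; rewrite /Pei mulr_sumr; apply: eq_bigr => z /eqP ->.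
Qed.

Lemma Pei_ge0 (p : R) i : 0 < p < 1 -> 0 <= Pei I p i.
Proof.
by move=> pI; apply: sumr_ge0 => z _; rewrite mulr_ge0 ?ler0n ?ltW ?bsc_gt0.
Qed.

End ImportanceSampling.

Lemma psumr_pmul_gt0 (R : realDomainType) (T : eqType) (r : seq T) (P : pred T)
    (F G : T -> R) :
  (forall i, P i -> 0 <= F i) -> (forall i, P i -> 0 < G i) ->
  0 < \sum_(i <- r | P i) F i -> 0 < \sum_(i <- r | P i) G i * F i.
Proof.
move=> F0 G0; have GF0 i : P i -> 0 <= G i * F i.
  by move=> Pi; exact: mulr_ge0 (ltW (G0 i Pi)) (F0 i Pi).
rewrite !lt0r sumr_ge0 // sumr_ge0 // !andbT !psumr_neq0 //.
by apply: sub_has => i /andP[Pi Fi]; rewrite Pi pmulr_rgt0 ?G0.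
Qed.

Lemma weighted_mean_root (F : fieldType) (T : Type) (r : seq T) (u w : T -> F) a :
  \sum_(x <- r) u x != 0 -> \sum_(x <- r) u x * (a - w x) = 0 ->
  a = (\sum_(x <- r) w x * u x) / \sum_(x <- r) u x.
Proof.
move=> u0 root; apply: (mulIf u0); rewrite divfK //; apply/eqP.
rewrite -subr_eq0 mulr_sumr -sumrB; apply/eqP; rewrite -[RHS]root.
by apply: eq_bigr => x _; ring.
Qed.

Theorem theorem1 (R : realType) (n N t : nat) (p : R)
    (I : {ffun 'I_n -> bool} -> bool) (qhat : R) :
  (1 <= n)%N -> (1 <= N)%N -> 0 < p < 1 ->
  (t < n)%N ->
  (forall z, (wt z <= t)%N -> I z = false) ->
  0 < \sum_(t.+1 <= i < n.+1) Pei I p i ->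
  0 < qhat < 1 ->
  (forall q : R, 0 < q < 1 -> Vis N I p qhat <= Vis N I p q) ->
  qhat = n%:R^-1 *
    ((\sum_(t.+1 <= i < n.+1) i%:R * W n i p qhat * Pei I p i) /
     (\sum_(t.+1 <= i < n.+1) W n i p qhat * Pei I p i)).
Proof.
move=> n_gt0 N_gt0 pI tn It Ppos qI Vmin.
have moment_min q : 0 < q < 1 -> second_moment I p qhat <= second_moment I p q.
  move=> qI'; move: (Vmin q qI'); rewrite !Vis_second_moment //.
  by rewrite ler_pM2l ?invr_gt0 ?ltr0n // lerD2r.
have denom_gt0 : 0 < \sum_(t.+1 <= i < n.+1) W n i p qhat * Pei I p i.
  by apply: psumr_pmul_gt0 => // i _; [exact: Pei_ge0 | exact: W_gt0].
rewrite !(sum_Pei_by_pattern _ _ tn It) in denom_gt0 *.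
under eq_bigr do rewrite -mulrA.
rewrite -(weighted_mean_root (lt0r_neq0 denom_gt0) (second_moment_stationary qI moment_min)).
by rewrite mulKf // pnatr_eq0 -lt0n.
Qed.
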